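(* Let $\mathbf{R}\in SO(3)$, $\theta\in(\theta^-,\theta^+)$ and $\mathbf{A}\in\mathbb{R}^{3\times2}$. Define $\mathbf{L}_1:=\mathbf{R}[\mathbf{v}(\theta)\otimes\tilde{\mathbf{e}}_1+\mathbf{u}(\theta)\otimes\tilde{\mathbf{e}}_2]$ and $\mathbf{L}_2:=\mathbf{R}[(\mathbf{v}(\theta)\cdot\mathbf{v}'(\theta))\mathbf{u}(\theta)\otimes\tilde{\mathbf{e}}_1-(\mathbf{u}(\theta)\cdot\mathbf{u}'(\theta))\mathbf{v}(\theta)\otimes\tilde{\mathbf{e}}_2]$. Then $\mathbf{L}_1:\mathbf{A}=0$ and $\mathbf{L}_2:\mathbf{A}=0$ if and only if there exist $\boldsymbol{\omega}\in\mathbb{R}^3$ and $\xi\in\mathbb{R}$ with $\mathbf{A}\tilde{\mathbf{e}}_1=\mathbf{R}[\boldsymbol{\omega}\times\mathbf{u}(\theta)+\xi\mathbf{u}'(\theta)]$ and $\mathbf{A}\tilde{\mathbf{e}}_2=\mathbf{R}[\boldsymbol{\omega}\times\mathbf{v}(\theta)+\xi\mathbf{v}'(\theta)]$. (Applied pointwise, this holds for fields $\mathbf{A}(\mathbf{x})$ with $\mathbf{R}=\mathbf{R}_{\mathrm{eff}}(\mathbf{x})$, $\theta=\theta(\mathbf{x})$.)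
   Context: $\mathbf{u},\mathbf{v}:(\theta^-,\theta^+)\to\mathbb{R}^3$ are the deformed lattice vectors $\mathbf{u}(\theta)=\mathbf{t}_1(\theta)-\mathbf{t}_3(\theta)$, $\mathbf{v}(\theta)=\mathbf{t}_2(\theta)-\mathbf{t}_4(\theta)$ of the analytic mechanism parameterization of a parallelogram origami cell (rigid folding preserving crease lengths, adjacent-crease angles and mountain-valley assignment); they are orthogonal to $\mathbf{e}_3$ with $\mathbf{e}_3\cdot(\mathbf{u}\times\mathbf{v})>0$, and $\mathbf{u}'(\theta)\cdot\mathbf{u}(\theta)\neq0$, $\mathbf{v}'(\theta)\cdot\mathbf{v}(\theta)\neq0$ on $(\theta^-,\theta^+)$; primes are $d/d\theta$. $\{\tilde{\mathbf{e}}_1,\tilde{\mathbf{e}}_2\}$ is the standard basis of $\mathbb{R}^2$; $\mathbf{A}:\mathbf{B}:=\mathrm{Tr}(\mathbf{A}^T\mathbf{B})$. *)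

From HB Require Import structures.
From mathcomp Require Import all_boot all_order all_algebra.
From mathcomp Require Import all_classical all_reals all_analysis.
Set Implicit Arguments. Unset Strict Implicit. Unset Printing Implicit Defensive.
Import Order.TTheory GRing.Theory Num.Theory.
Import numFieldNormedType.Exports.
Local Open Scope ring_scope.

Section Defs.
Variable R : realType.

Definition dotv (n : nat) (a b : 'cV[R]_n) : R := \sum_(i < n) a i 0 * b i 0.

Definition cross (a b : 'cV[R]_3) : 'cV[R]_3 :=
  \col_(i < 3)
    (if i == 0 :> nat then a 1 0 * b 2 0 - a 2 0 * b 1 0
     else if i == 1 :> nat then a 2 0 * b 0 0 - a 0 0 * b 2 0
     else a 0 0 * b 1 0 - a 1 0 * b 0 0).

(* e_3 in R^3 and the standard basis e~_1, e~_2 of R^2 (indices 0,1) *)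
Definition e3 : 'cV[R]_3 := delta_mx 2 0.
Definition et (i : 'I_2) : 'cV[R]_2 := delta_mx i 0.

Definition tens (m n : nat) (a : 'cV[R]_m) (b : 'cV[R]_n) : 'M[R]_(m, n) :=
  a *m b^T.

Definition frob (m n : nat) (A B : 'M[R]_(m, n)) : R := \tr (A^T *m B).

Definition is_SO3 (Q : 'M[R]_3) : Prop := Q^T *m Q = 1%:M /\ \det Q = 1.

(* lattice vectors u = t1 - t3, v = t2 - t4 (creases indexed 0..3) *)
Definition uvec (t : 'I_4 -> R -> 'cV[R]_3) (s : R) : 'cV[R]_3 :=
  t 0 s - t 2 s.
Definition vvec (t : 'I_4 -> R -> 'cV[R]_3) (s : R) : 'cV[R]_3 :=
  t 1 s - t 3 s.

Definition in_int (a b s : R) : Prop := a < s < b.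

(* The mechanism of the parallelogram origami cell on (thm, thp):
   crease vectors t_1..t_4 depending differentiably on theta, rigid folding
   (crease lengths and angles between adjacent creases preserved, i.e. the
   Gram entries |t_i|^2 and t_i . t_{i+1} are constant), together with the
   standing assumptions on u, v from the context. *)
Definition origami_mechanism (thm thp : R) (t : 'I_4 -> R -> 'cV[R]_3) : Prop :=
  [/\ thm < thp,
      (forall i s, in_int thm thp s -> derivable (t i) s 1),
      (forall i s1 s2, in_int thm thp s1 -> in_int thm thp s2 ->
          dotv (t i s1) (t i s1) = dotv (t i s2) (t i s2) /\
          dotv (t i s1) (t (ordS i) s1) = dotv (t i s2) (t (ordS i) s2)),
      (forall s, in_int thm thp s ->
          [/\ dotv (uvec t s) e3 = 0, dotv (vvec t s) e3 = 0 &
              0 < dotv e3 (cross (uvec t s) (vvec t s))]) &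
      (forall s, in_int thm thp s ->
          dotv (derive1 (uvec t) s) (uvec t s) != 0 /\
          dotv (derive1 (vvec t) s) (vvec t s) != 0)].

Definition L1 (Q : 'M[R]_3) (t : 'I_4 -> R -> 'cV[R]_3) (s : R) : 'M[R]_(3, 2) :=
  Q *m (tens (vvec t s) (et 0) + tens (uvec t s) (et 1)).

Definition L2 (Q : 'M[R]_3) (t : 'I_4 -> R -> 'cV[R]_3) (s : R) : 'M[R]_(3, 2) :=
  Q *m ((dotv (vvec t s) (derive1 (vvec t) s)) *: tens (uvec t s) (et 0)
        - (dotv (uvec t s) (derive1 (uvec t) s)) *: tens (vvec t s) (et 1)).

End Defs.

From HB Require Import structures.
From mathcomp Require Import all_boot all_order all_algebra.
From mathcomp Require Import all_classical all_reals all_analysis.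
From mathcomp Require Import ring lra.
Set Implicit Arguments. Unset Strict Implicit. Unset Printing Implicit Defensive.
Import Order.TTheory GRing.Theory Num.Theory.
Import numFieldNormedType.Exports.
Local Open Scope ring_scope.

(* Testing against the tensors and transporting by R^T turns L1 : A = 0 and
   L2 : A = 0 into v.a + u.b = 0 and (v.v')(u.a) = (u.u')(v.b) for the columns
   a, b of R^T A.  Rigid folding keeps u.v constant, so u.v' + v.u' = 0, and
   together with the skew-symmetry of x |-> w x x this shows that every pair
   (w x u + xi u', w x v + xi v') satisfies both conditions.  Conversely, with
   xi := u.a / u.u' the pair (a - xi u', b - xi v') is skew on the plane
   span(u, v) = e3^perp, and any such pair is (w x u, w x v) for some w. *)

Section Algebra.
Variable R : realType.
Implicit Types (a b c w x y : 'cV[R]_3).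

Lemma dotvC n (a b : 'cV[R]_n) : dotv a b = dotv b a.
Proof. by apply: eq_bigr => i _; rewrite mulrC. Qed.

Lemma dotvDr n (a b c : 'cV[R]_n) : dotv c (a + b) = dotv c a + dotv c b.
Proof. by rewrite /dotv -big_split; apply: eq_bigr => i _; rewrite mxE mulrDr. Qed.

Lemma dotvBr n (a b c : 'cV[R]_n) : dotv c (a - b) = dotv c a - dotv c b.
Proof. by rewrite /dotv -sumrB; apply: eq_bigr => i _; rewrite !mxE mulrBr. Qed.

Lemma dotvBl n (a b c : 'cV[R]_n) : dotv (a - b) c = dotv a c - dotv b c.
Proof. by rewrite dotvC dotvBr !(dotvC c). Qed.

Lemma dotvZr n k (a b : 'cV[R]_n) : dotv a (k *: b) = k * dotv a b.
Proof. by rewrite /dotv mulr_sumr; apply: eq_bigr => i _; rewrite mxE mulrCA. Qed.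

Lemma dotv3E a b : dotv a b = a 0 0 * b 0 0 + a 1 0 * b 1 0 + a 2 0 * b 2 0.
Proof.
rewrite /dotv !big_ord_recl big_ord0 addr0 addrA.
by congr (_ + _ * _ + _ * _); congr (_ _ _); apply/val_inj.
Qed.

Lemma dotv_e3 x : dotv x (e3 R) = x 2 0.
Proof. by rewrite dotv3E !mxE /= !mulr0 mulr1 !add0r. Qed.

Lemma crossE a b :
  [/\ cross a b 0 0 = a 1 0 * b 2 0 - a 2 0 * b 1 0,
      cross a b 1 0 = a 2 0 * b 0 0 - a 0 0 * b 2 0 &
      cross a b 2 0 = a 0 0 * b 1 0 - a 1 0 * b 0 0].
Proof. by rewrite !mxE. Qed.

Lemma dotv_cross_id a b : dotv a (cross b a) = 0.
Proof. by case: (crossE b a) => c0 c1 c2; rewrite dotv3E c0 c1 c2; ring. Qed.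

Lemma dotv_cross_cycle a b c : dotv a (cross b c) = dotv b (cross c a).
Proof.
case: (crossE b c) => x0 x1 x2; case: (crossE c a) => y0 y1 y2.
by rewrite !dotv3E x0 x1 x2 y0 y1 y2; ring.
Qed.

Lemma dotv_cross_skew a b w : dotv a (cross w b) + dotv b (cross w a) = 0.
Proof.
case: (crossE w b) => x0 x1 x2; case: (crossE w a) => y0 y1 y2.
by rewrite !dotv3E x0 x1 x2 y0 y1 y2; ring.
Qed.

Lemma col3_eq x y : x 0 0 = y 0 0 -> x 1 0 = y 1 0 -> x 2 0 = y 2 0 -> x = y.
Proof.
move=> h0 h1 h2; apply/matrixP => i j; rewrite ord1.
case: i => -[|[|[|//]]] Hi.
- by rewrite (_ : Ordinal Hi = 0) //; apply/val_inj.
- by rewrite (_ : Ordinal Hi = 1) //; apply/val_inj.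
- by rewrite (_ : Ordinal Hi = 2) //; apply/val_inj.
Qed.

End Algebra.

Section Planar.
Variable R : realType.
Implicit Types (a b p q w x : 'cV[R]_3).
Variables u v : 'cV[R]_3.
Hypotheses (u_planar : u 2 0 = 0) (v_planar : v 2 0 = 0).
Hypothesis uv_indep : cross u v 2 0 != 0.

Lemma dotv_cross_planar w : dotv w (cross u v) = w 2 0 * cross u v 2 0.
Proof.
case: (crossE u v) => c0 c1 _.
by rewrite dotv3E c0 c1 u_planar v_planar; ring.
Qed.

Lemma planar_dotv_eq0 x : x 2 0 = 0 -> dotv u x = 0 -> dotv v x = 0 -> x = 0.
Proof.
move=> x_planar; rewrite !dotv3E u_planar v_planar x_planar !mulr0 !addr0 => hu hv.
have dnz := uv_indep; have [_ _ d_def] := crossE u v; rewrite d_def in dnz.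
apply: col3_eq; rewrite ?mxE ?x_planar //; apply: (mulIf dnz); rewrite mul0r.
- transitivity (v 1 0 * (u 0 0 * x 0 0 + u 1 0 * x 1 0)
                - u 1 0 * (v 0 0 * x 0 0 + v 1 0 * x 1 0)); first by ring.
  by rewrite hu hv; ring.
- transitivity (u 0 0 * (v 0 0 * x 0 0 + v 1 0 * x 1 0)
                - v 0 0 * (u 0 0 * x 0 0 + u 1 0 * x 1 0)); first by ring.
  by rewrite hu hv; ring.
Qed.

Lemma skew_pair_cross p q :
  [/\ dotv u p = 0, dotv v q = 0 & dotv v p + dotv u q = 0] <->
  exists w, p = cross w u /\ q = cross w v.
Proof.
split; last first.
  move=> [w [-> ->]]; split; rewrite ?dotv_cross_id //.
  by rewrite addrC dotv_cross_skew.
move=> [up vq vpuq].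
pose d := cross u v 2 0.
have dnz : u 0 0 * v 1 0 - u 1 0 * v 0 0 != 0 by move: uv_indep; rewrite mxE.
(* w's e3-component produces the in-plane parts of p and q, its in-plane
   part their e3-components *)
pose w := d^-1 *: (q 2 0 *: u - p 2 0 *: v + dotv v p *: e3 R).
have w3 : w 2 0 * d = dotv v p.
  by rewrite !mxE /= u_planar v_planar; field.
exists w; split; apply/eqP; rewrite eq_sym -subr_eq0; apply/eqP;
  apply: planar_dotv_eq0; rewrite ?dotvBr.
- by rewrite /w /d !mxE /=; field.
- by rewrite dotv_cross_id up subrr.
- by rewrite dotv_cross_cycle dotv_cross_planar w3 subrr.
- by rewrite /w /d !mxE /=; field.
- have := dotv_cross_skew u v w.
  by rewrite [dotv v _]dotv_cross_cycle dotv_cross_planar w3; lra.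
- by rewrite dotv_cross_id vq subrr.
Qed.

Variables u' v' : 'cV[R]_3.
Hypothesis uu'_neq0 : dotv u u' != 0.
Hypothesis gram_rate : dotv u v' + dotv v u' = 0.

Lemma dotv_constraints_iff_cross a b :
  dotv v a + dotv u b = 0 /\ dotv v v' * dotv u a - dotv u u' * dotv v b = 0 <->
  exists w xi, a = cross w u + xi *: u' /\ b = cross w v + xi *: v'.
Proof.
split; last first.
  move=> [w [xi [-> ->]]]; rewrite !dotvDr !dotvZr.
  split; last by rewrite !dotv_cross_id; ring.
  rewrite addrACA [dotv v (cross _ _) + _]addrC dotv_cross_skew.
  by rewrite -mulrDr (addrC (dotv v u')) gram_rate mulr0 add0r.
move=> [lin quad].
(* xi is forced, since u . (w x u) = 0 *)
pose xi := dotv u a / dotv u u'.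
have [|w [ap bq]] := (skew_pair_cross (a - xi *: u') (b - xi *: v')).1.
  rewrite !dotvBr !dotvZr; split.
  - by rewrite /xi mulfVK // subrr.
  - transitivity ((dotv u u')^-1 * (dotv u u' * dotv v b - dotv v v' * dotv u a)).
      by rewrite /xi; field.
    by rewrite -opprB quad oppr0 mulr0.
  - transitivity (dotv v a + dotv u b - xi * (dotv u v' + dotv v u')); first by ring.
    by rewrite lin gram_rate mulr0 subr0.
by exists w, xi; rewrite -ap -bq !subrK.
Qed.

End Planar.

Section Frobenius.
Variable R : realType.

Lemma frob_tens m n (x : 'cV[R]_m) (y : 'cV[R]_n) (B : 'M[R]_(m, n)) :
  frob (tens x y) B = dotv x (B *m y).
Proof.
rewrite /frob /tens trmx_mul trmxK -mulmxA mxtrace_mulC /mxtrace big_ord1.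
by rewrite -mulmxA mxE; apply: eq_bigr => i _; rewrite mxE.
Qed.

Lemma frobDl m n (M N B : 'M[R]_(m, n)) : frob (M + N) B = frob M B + frob N B.
Proof. by rewrite /frob raddfD mulmxDl mxtraceD. Qed.

Lemma frobBl m n (M N B : 'M[R]_(m, n)) : frob (M - N) B = frob M B - frob N B.
Proof. by rewrite /frob raddfB mulmxBl raddfB. Qed.

Lemma frobZl m n k (M B : 'M[R]_(m, n)) : frob (k *: M) B = k * frob M B.
Proof. by rewrite /frob linearZ /= -scalemxAl mxtraceZ. Qed.

Lemma frob_mulmxl m n (Q : 'M[R]_m) (M B : 'M[R]_(m, n)) :
  frob (Q *m M) B = frob M (Q^T *m B).
Proof. by rewrite /frob trmx_mul mulmxA. Qed.

Lemma orthomx_trmx_mulmx_eq m n (Q : 'M[R]_m) : Q^T *m Q = 1%:M ->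
  forall X Y : 'M[R]_(m, n), Q^T *m X = Y <-> X = Q *m Y.
Proof.
move=> QtQ X Y; have QQt : Q *m Q^T = 1%:M by apply: mulmx1C.
by split=> [<-|->]; rewrite mulmxA ?QQt ?QtQ mul1mx.
Qed.

End Frobenius.

Section Derivative.
Variable R : realType.

Lemma derive_dotv n (f g : R -> 'cV[R]_n) (x : R) :
  derivable f x 1 -> derivable g x 1 ->
  'D_1 (fun s => dotv (f s) (g s)) x = dotv (f x) ('D_1 g x) + dotv (g x) ('D_1 f x).
Proof.
move=> df dg.
have dfi i : derivable (fun s => f s i 0) x 1 := (derivable_mxP _ _ _).1 df i 0.
have dgi i : derivable (fun s => g s i 0) x 1 := (derivable_mxP _ _ _).1 dg i 0.
have -> : (fun s => dotv (f s) (g s)) =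
    \sum_(i < n) ((fun s => f s i 0) * (fun s => g s i 0)).
  by rewrite fct_sumE; apply/funext => s.
rewrite derive_sum => [|i]; last exact: derivableM.
rewrite /dotv -big_split /=; apply: eq_bigr => i _.
by rewrite deriveM // (derive_mx df) (derive_mx dg) !mxE addrC.
Qed.

Lemma derive_locally_const (f : R -> R) (a b x : R) : x \in `]a, b[ ->
  {in `]a, b[, forall s, f s = f x} -> 'D_1 f x = 0.
Proof.
move=> x_in f_const; rewrite (@near_eq_derive _ _ _ _ (cst (f x))) ?derive_cst //.
by apply: filterS (near_in_itvoo x_in) => s /f_const.
Qed.

End Derivative.

Section Mechanism.
Variables (R : realType) (thm thp : R) (t : 'I_4 -> R -> 'cV[R]_3).
Hypothesis mech : origami_mechanism thm thp t.

Lemma uvec_derivable s : in_int thm thp s -> derivable (uvec t) s 1.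
Proof.
have [_ dt _ _ _] := mech; move=> s_in.
by rewrite (_ : uvec t = t 0 - t 2) //; apply: derivableB; apply: dt.
Qed.

Lemma vvec_derivable s : in_int thm thp s -> derivable (vvec t) s 1.
Proof.
have [_ dt _ _ _] := mech; move=> s_in.
by rewrite (_ : vvec t = t 1 - t 3) //; apply: derivableB; apply: dt.
Qed.

(* u . v = t1.t2 - t1.t4 - t3.t2 + t3.t4 only involves adjacent creases *)
Lemma mechanism_dotuv_const s1 s2 : in_int thm thp s1 -> in_int thm thp s2 ->
  dotv (uvec t s1) (vvec t s1) = dotv (uvec t s2) (vvec t s2).
Proof.
have [_ _ rigid _ _] := mech; move=> s1_in s2_in.
have adj (i j : 'I_4) : val j = (i.+1 %% 4)%N ->
    dotv (t i s1) (t j s1) = dotv (t i s2) (t j s2).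
  by move=> ij; rewrite (_ : j = ordS i); [case: (rigid i s1 s2) | apply: val_inj].
rewrite /uvec /vvec !dotvBl !dotvBr.
rewrite !(dotvC (t 2 _) (t 1 _)) !(dotvC (t 0 _) (t 3 _)).
by rewrite (adj 0 1) // (adj 1 2) // (adj 2 3) // (adj 3 0).
Qed.

Lemma mechanism_gram_rate s : in_int thm thp s ->
  dotv (uvec t s) (derive1 (vvec t) s) + dotv (vvec t s) (derive1 (uvec t) s) = 0.
Proof.
move=> s_in; rewrite !derive1E -derive_dotv;
  [|exact: uvec_derivable | exact: vvec_derivable].
apply: (@derive_locally_const _ _ thm thp); first by rewrite in_itv.
by move=> r; rewrite in_itv => /mechanism_dotuv_const; apply.
Qed.

End Mechanism.

Theorem lemmaB2 (R : realType) (thm thp : R) (t : 'I_4 -> R -> 'cV[R]_3)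
  (Hmech : origami_mechanism thm thp t)
  (Q : 'M[R]_3) (HQ : is_SO3 Q) (th : R) (Hth : thm < th < thp)
  (A : 'M[R]_(3, 2)) :
  (frob (L1 Q t th) A = 0 /\ frob (L2 Q t th) A = 0) <->
  exists (w : 'cV[R]_3) (xi : R),
    A *m et R 0 = Q *m (cross w (uvec t th) + xi *: derive1 (uvec t) th) /\
    A *m et R 1 = Q *m (cross w (vvec t th) + xi *: derive1 (vvec t) th).
Proof.
have th_in : in_int thm thp th := Hth.
have [_ _ _ /(_ th th_in) [u_e3 v_e3 uv_e3] /(_ th th_in) [uu' _]] := Hmech.
have u_planar : uvec t th 2 0 = 0 by rewrite -dotv_e3.
have v_planar : vvec t th 2 0 = 0 by rewrite -dotv_e3.
have uv_indep : cross (uvec t th) (vvec t th) 2 0 != 0.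
  by rewrite -dotv_e3 dotvC gt_eqF.
rewrite dotvC in uu'.
rewrite /L1 /L2 !frob_mulmxl frobDl frobBl !frobZl !frob_tens -!mulmxA.
rewrite (dotv_constraints_iff_cross u_planar v_planar uv_indep uu'
  (mechanism_gram_rate Hmech th_in)).
by setoid_rewrite (orthomx_trmx_mulmx_eq HQ.1).
Qed.
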